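(* Let $\lambda$ be a partition with $n$ parts and let $\beta \in U_\lambda(n)$. If the terminal pair $(\lambda,\beta)$ is nonpermutable, then $\beta \in UGC_\lambda(n) \cap UBP_\lambda(n)$.
   Context: Fix an integer $n \geq 1$ and write $[k] = \{1,\dots,k\}$. A partition is $\lambda = (\lambda_1,\dots,\lambda_n)$ with $\lambda_1 \geq \dots \geq \lambda_n \geq 0$ integers. Let $R_\lambda \subseteq [n-1]$ be the set of $q \in [n-1]$ with $\lambda_q > \lambda_{q+1}$; write its elements $q_1 < \dots < q_r$, and set $q_0 := 0$, $q_{r+1} := n$. For $h \in [r+1]$ the $h$-th carrel is the index interval $\{q_{h-1}+1,\dots,q_h\}$. A $\lambda$-tuple is an $n$-tuple $\beta$ with entries in $[n]$, considered with this carrel structure; it is upper if $\beta_i \geq i$ for all $i$. $U_\lambda(n)$ is the set of upper $\lambda$-tuples. Critical indices: for $\beta \in U_\lambda(n)$ and $h \in [r+1]$, set $x_1 := q_h$; given $x_{u-1}$, if some index $x$ with $q_{h-1} < x < x_{u-1}$ satisfies $\beta_{x_{u-1}} - \beta_x > x_{u-1} - x$, let $x_u$ be the largest such $x$, otherwise stop. The $x_u$ are the critical indices of $\beta$ in carrel $h$; the pairs $(x_u,\beta_{x_u})$ form its critical list. For $i \in [n]$ let $x(i)$ be the smallest critical index in the carrel of $i$ with $x(i) \geq i$. The $\lambda$-platform is $\Xi_\lambda(\beta) := \xi$ with $\xi_i := \beta_{x(i)}$. The critical list is a flag critical list if for every $h \in [r]$, $\beta_{q_h} \leq \beta_k$ where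 $k$ is the smallest critical index of $\beta$ in carrel $h+1$. $UGC_\lambda(n)$ is the set of $\beta \in U_\lambda(n)$ with flag critical list; $UBP_\lambda(n)$ is the set of $\beta \in U_\lambda(n)$ with $\beta_i \leq \Xi_\lambda(\beta)_i$ for all $i$. Lattice paths: lattice points are integer pairs $(a,b)$ with $a \geq 0$, $b \geq 1$. A lattice path is a sequence of lattice points each consecutive step of which is $(a,b) \to (a+1,b)$ or $(a,b) \to (a,b+1)$. An $n$-path is $(\Lambda_1,\dots,\Lambda_n)$ with $\Lambda_m$ a lattice path starting at $(n-m,m)$. The terminals of $(\lambda,\beta)$ are $P_m := (\lambda_m + n - m, \beta_m)$, $m \in [n]$. For a permutation $\pi$ of $[n]$, $\mathcal{LD}_\lambda(\beta;\pi)$ is the set of $n$-paths with $\Lambda_m$ ending at $P_{\pi_m}$ for every $m$ and no two distinct components sharing a lattice point. The pair $(\lambda,\beta)$ is nonpermutable if $\mathcal{LD}_\lambda(\beta;\pi) = \emptyset$ for every permutation $\pi \neq (1,\dots,n)$. *)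

(* MathComp (boot). Indices are 1-based natural numbers; a tuple
   (x_1,...,x_n) is represented by a function nat -> nat of which only the
   values at 1..n matter. *)
From mathcomp Require Import all_boot.
Set Implicit Arguments. Unset Strict Implicit. Unset Printing Implicit Defensive.

Definition is_partition (n : nat) (lam : nat -> nat) : Prop :=
  forall i, 1 <= i -> i < n -> lam i.+1 <= lam i.

Definition Rlam (n : nat) (lam : nat -> nat) : seq nat :=
  [seq q <- iota 1 (n.-1) | lam q.+1 < lam q].

Definition bounds (n : nat) (lam : nat -> nat) : seq nat :=
  0 :: rcons (Rlam n lam) n.

Definition rlam (n : nat) (lam : nat -> nat) : nat := size (Rlam n lam).
Definition qq (n : nat) (lam : nat -> nat) (h : nat) : nat := nth 0 (bounds n lam) h.

Definition in_U (n : nat) (beta : nat -> nat) : Prop :=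
  forall i, 1 <= i <= n -> [/\ 1 <= beta i, beta i <= n & i <= beta i].

Definition crit_cands (beta : nat -> nat) (lo y : nat) : seq nat :=
  [seq x <- iota lo.+1 (y - lo.+1) | beta x + y < beta y + x].

(* the chain x_1 := y, x_{u} := largest candidate below x_{u-1}, ...
   (fuel: the chain strictly decreases, so y steps suffice) *)
Fixpoint crit_from (beta : nat -> nat) (lo y fuel : nat) : seq nat :=
  match fuel with
  | 0 => [:: y]
  | f.+1 =>
    let c := crit_cands beta lo y in
    if c is [::] then [:: y] else y :: crit_from beta lo (last 0 c) f
  end.

Definition crits (n : nat) (lam beta : nat -> nat) (h : nat) : seq nat :=
  crit_from beta (qq n lam h.-1) (qq n lam h) (qq n lam h).

Definition carrel_of (n : nat) (lam : nat -> nat) (i : nat) : nat :=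
  (find (fun q => i <= q) (rcons (Rlam n lam) n)).+1.

Definition min_le (n : nat) (s : seq nat) : nat := foldr minn n s.

Definition xcrit (n : nat) (lam beta : nat -> nat) (i : nat) : nat :=
  min_le n [seq x <- crits n lam beta (carrel_of n lam i) | i <= x].

Definition platform (n : nat) (lam beta : nat -> nat) (i : nat) : nat :=
  beta (xcrit n lam beta i).

Definition flag_crit (n : nat) (lam beta : nat -> nat) : Prop :=
  forall h, 1 <= h <= rlam n lam ->
    beta (qq n lam h) <= beta (min_le n (crits n lam beta h.+1)).

Definition in_UGC (n : nat) (lam beta : nat -> nat) : Prop :=
  in_U n beta /\ flag_crit n lam beta.

Definition in_UBP (n : nat) (lam beta : nat -> nat) : Prop :=
  in_U n beta /\ forall i, 1 <= i <= n -> beta i <= platform n lam beta i.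

Definition lattice_point (p : nat * nat) : bool := 1 <= p.2.

Definition lstep (p q : nat * nat) : bool :=
  (q == (p.1.+1, p.2)) || (q == (p.1, p.2.+1)).

Definition lattice_path (s : seq (nat * nat)) : bool :=
  [&& s != [::], all lattice_point s & sorted lstep s].

Definition terminal (n : nat) (lam beta : nat -> nat) (m : nat) : nat * nat :=
  (lam m + (n - m), beta m).

Definition is_perm_n (n : nat) (pi : nat -> nat) : Prop :=
  (forall m, 1 <= m <= n -> 1 <= pi m <= n) /\
  (forall m m', 1 <= m <= n -> 1 <= m' <= n -> pi m = pi m' -> m = m').

Definition in_LD (n : nat) (lam beta pi : nat -> nat)
    (Lam : nat -> seq (nat * nat)) : Prop :=
  (forall m, 1 <= m <= n ->
     [/\ lattice_path (Lam m),
         head (0, 0) (Lam m) = (n - m, m) &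
         last (0, 0) (Lam m) = terminal n lam beta (pi m)]) /\
  (forall m m', 1 <= m <= n -> 1 <= m' <= n -> m <> m' ->
     forall p, p \in Lam m -> p \notin Lam m').

Definition nonpermutable (n : nat) (lam beta : nat -> nat) : Prop :=
  forall pi, is_perm_n n pi -> (exists m, 1 <= m <= n /\ pi m <> m) ->
    ~ (exists Lam, in_LD n lam beta pi Lam).

From mathcomp Require Import all_boot zify.
Set Implicit Arguments. Unset Strict Implicit. Unset Printing Implicit Defensive.

(* If beta violated the flag or the platform condition, there would be
   indices i0 < k with beta_k < beta_i0 and k critical in its carrel, so that
   beta_j - beta_k > j - k for every later j up to the end q of the carrel.
   Let i be the last index before k with beta_i > beta_k.  The cycle
   i -> i+1 -> ... -> k -> i is then realised by non-intersecting lattice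
   paths, each made of one or two hooks: path k passes above the terminals
   P_(i+1), ..., P_k on its way to P_i, and the steepness of beta after k
   leaves room for the paths that follow.  This contradicts nonpermutability.
   If q = n, upperness of beta alone excludes such i0 and k. *)

(** * Hook paths *)

Definition lattice_step (p : nat * nat) (north : bool) : nat * nat :=
  if north then (p.1, p.2.+1) else (p.1.+1, p.2).

Definition walk (p : nat * nat) (ms : seq bool) : seq (nat * nat) :=
  p :: scanl lattice_step p ms.

Definition le_pt (p q : nat * nat) : bool := (p.1 <= q.1) && (p.2 <= q.2).

Lemma walk_sorted p ms : sorted lstep (walk p ms).
Proof.
elim: ms p => //= b ms IH p; rewrite IH andbT /lstep.
by case: b; rewrite eqxx ?orbT.
Qed.

Lemma last_walk p ms d : last d (walk p ms) = foldl lattice_step p ms.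
Proof. by elim: ms p => //= b ms IH p; rewrite -(IH _ d). Qed.

Lemma mem_walk p ms x :
  x \in walk p ms -> le_pt p x && le_pt x (foldl lattice_step p ms).
Proof.
elim: ms p x => [|b ms IH] p x; first by rewrite inE => /eqP ->; rewrite /le_pt !leqnn.
have step_ge : le_pt p (lattice_step p b) by case: b; rewrite /le_pt /= !leqnSn ?leqnn.
have end_ge : le_pt (lattice_step p b) (foldl lattice_step (lattice_step p b) ms).
  by case/andP: (IH _ (lattice_step p b) (mem_head _ _)).
by rewrite inE => /orP [/eqP -> | /IH] /=; move: step_ge end_ge; rewrite /le_pt; lia.
Qed.

Lemma mem_walk_cat p ms1 ms2 x : x \in walk p (ms1 ++ ms2) ->
  x \in walk p ms1 \/ x \in walk (foldl lattice_step p ms1) ms2.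
Proof.
rewrite /walk scanl_cat -cat_cons mem_cat => /orP [] x_in; first by left.
by right; rewrite inE x_in orbT.
Qed.

Lemma foldl_step_nseq p a north :
  foldl lattice_step p (nseq a north) = if north then (p.1, p.2 + a) else (p.1 + a, p.2).
Proof.
elim: a p => [|a IH] [x y] /=; first by case: (north); rewrite addn0.
by rewrite IH; case: (north); rewrite /= addnS.
Qed.

Definition hook_steps (p q : nat * nat) : seq bool :=
  nseq (q.1 - p.1) false ++ nseq (q.2 - p.2) true.

Definition on_hook (p q x : nat * nat) : bool :=
  (x.2 == p.2) && (p.1 <= x.1 <= q.1) || (x.1 == q.1) && (p.2 <= x.2 <= q.2).

Lemma foldl_hook_steps p q : le_pt p q -> foldl lattice_step p (hook_steps p q) = q.
Proof.
case: p q => [x y] [x' y'] /andP [/= le_x le_y].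
by rewrite foldl_cat !foldl_step_nseq /= !subnKC.
Qed.

Lemma mem_hook_walk p q x : le_pt p q -> x \in walk p (hook_steps p q) -> on_hook p q x.
Proof.
case: p q x => [a b] [c d] [u v] /andP [/= le_ac le_bd].
move=> /mem_walk_cat [] /mem_walk; rewrite !foldl_step_nseq /on_hook /le_pt /=; lia.
Qed.

Definition corner_path (s : nat * nat) (cs : seq (nat * nat)) : seq (nat * nat) :=
  walk s (flatten (pairmap hook_steps s cs)).

Lemma last_corner_path s cs d : path le_pt s cs -> last d (corner_path s cs) = last s cs.
Proof.
rewrite /corner_path last_walk.
elim: cs s => //= c cs IH s /andP [le_sc path_cs].
by rewrite foldl_cat foldl_hook_steps // IH.
Qed.

Lemma lattice_path_corner_path s cs : 0 < s.2 -> lattice_path (corner_path s cs).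
Proof.
move=> s_pos; rewrite /lattice_path walk_sorted andbT /=.
rewrite /lattice_point s_pos /=; apply/allP => x x_in.
have /mem_walk /andP [/andP [_ le_y] _] : x \in corner_path s cs by rewrite inE x_in orbT.
exact: leq_trans le_y.
Qed.

Lemma mem_corner_path s cs x : cs != [::] -> path le_pt s cs -> x \in corner_path s cs ->
  has (fun h => on_hook h.1 h.2 x) (pairmap pair s cs).
Proof.
elim: cs s => // c cs IH s _ /andP [le_sc mono].
rewrite /corner_path /= => /mem_walk_cat [/(mem_hook_walk le_sc) -> // | ].
rewrite foldl_hook_steps //; case: cs IH mono => [_ _ | c' cs IH mono x_in].
  by rewrite inE => /eqP ->; move: le_sc; rewrite /on_hook /le_pt; lia.
by rewrite IH ?orbT.
Qed.

Definition hook_sep (h h' : (nat * nat) * (nat * nat)) : bool :=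
  let: (p, q) := h in let: (p', q') := h' in
  [|| (p.2 < p'.2) && (q'.1 < q.1), q.2 < p'.2 | q'.1 < p.1].

Definition hooks_apart (h h' : (nat * nat) * (nat * nat)) : bool :=
  hook_sep h h' || hook_sep h' h.

Lemma on_hook_sep p q p' q' x :
  le_pt p q -> hook_sep (p, q) (p', q') -> on_hook p q x -> on_hook p' q' x -> False.
Proof. rewrite /le_pt /hook_sep /on_hook; lia. Qed.

Lemma path_le_pt_hooks s cs : path le_pt s cs -> all (fun h => le_pt h.1 h.2) (pairmap pair s cs).
Proof. by elim: cs s => //= c cs IH s /andP [-> /IH]. Qed.

Lemma corner_paths_disjoint s cs s' cs' x :
  cs != [::] -> cs' != [::] -> path le_pt s cs -> path le_pt s' cs' ->
  allrel hooks_apart (pairmap pair s cs) (pairmap pair s' cs') ->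
  x \in corner_path s cs -> x \notin corner_path s' cs'.
Proof.
move=> ne ne' mono mono' /allrelP apart.
move=> /(mem_corner_path ne mono) /hasP [[p q] h_in on_h].
apply/negP => /(mem_corner_path ne' mono') /hasP [[p' q'] h'_in on_h'].
have /allP /(_ _ h_in) le_h := path_le_pt_hooks mono.
have /allP /(_ _ h'_in) le_h' := path_le_pt_hooks mono'.
case/orP: (apart _ _ h_in h'_in) => sep.
- exact: on_hook_sep le_h sep on_h on_h'.
- exact: on_hook_sep le_h' sep on_h' on_h.
Qed.

Lemma partition_antitone n lam a b :
  is_partition n lam -> 0 < a -> a <= b -> b <= n -> lam b <= lam a.
Proof.
move=> lamP a_pos le_ab b_le; pose D := [pred j | 0 < j <= n].
have homo : {in D &, {homo lam : x y / x <= y >-> y <= x}}.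
  apply: homo_leq_in => [//|y x z le_yx le_zy|x y|x].
  - exact: leq_trans le_zy le_yx.
  - by rewrite !inE => ? ? z; rewrite inE; lia.
  - by rewrite !inE => /andP [x_pos _] /andP [_ x_lt]; apply: lamP.
by apply: homo; rewrite ?inE; lia.
Qed.

(** * The swap construction *)

Section Swap.
Variables (n : nat) (lam beta : nat -> nat) (i k : nat).
Hypotheses (lamP : is_partition n lam) (betaU : in_U n beta).
Hypotheses (i_pos : 0 < i) (lt_ik : i < k) (k_le : k <= n).
Hypotheses (descent : beta k < beta i) (below_k : forall j, i < j < k -> beta j <= beta k).
Hypotheses (lamk_pos : 0 < lam k)
  (spread : forall j, k < j <= n -> lam j = lam k -> beta k + (j - k) < beta j).

Local Notation col j := (lam j + (n - j)).
Local Notation P j := (terminal n lam beta j).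

Let upper j : 0 < j <= n -> j <= beta j.
Proof. by case/betaU. Qed.

Let antitone a b : 0 < a -> a <= b -> b <= n -> lam b <= lam a.
Proof. exact: partition_antitone. Qed.

Definition swap_perm (m : nat) : nat :=
  if m < i then m else if m < k then m.+1 else if m == k then i else m.

(* Path [k] climbs to row [beta k + 1] in column [col k - 1] before running
   to [P i]; the later paths with [lam m = lam k] stay one column to the left
   until they are above that row. *)
Definition swap_corners (m : nat) : seq (nat * nat) :=
  if m < i then [:: P m]
  else if m < k then [:: P m.+1]
  else if m == k then [:: ((col k).-1, (beta k).+1); P i]
  else if lam m == lam k then [:: ((col m).-1, (beta k + (m - k)).+1); P m]
  else [:: P m].

Definition swap_paths (m : nat) : seq (nat * nat) := corner_path (n - m, m) (swap_corners m).

Variant swap_spec (m : nat) : nat -> seq (nat * nat) -> Prop :=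
  | SwapBelow of m < i & lam i <= lam m : swap_spec m m [:: P m]
  | SwapShift of i <= m < k & lam k <= lam m.+1 <= lam m & beta m.+1 <= beta k :
      swap_spec m m.+1 [:: P m.+1]
  | SwapTop of m = k : swap_spec m i [:: ((col k).-1, (beta k).+1); P i]
  | SwapBlock of k < m & lam m = lam k :
      swap_spec m m [:: ((col m).-1, (beta k + (m - k)).+1); P m]
  | SwapAbove of k < m & lam m < lam k : swap_spec m m [:: P m].

Lemma swap_cornersP m : 0 < m <= n -> swap_spec m (swap_perm m) (swap_corners m).
Proof.
move=> /andP [m_pos m_le]; rewrite /swap_perm /swap_corners.
case: ltnP => [lt_mi | le_im]; first by apply: SwapBelow; rewrite ?antitone //; lia.
case: ltnP => [lt_mk | le_km].
  apply: SwapShift; first by lia.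
    by apply/andP; split; apply: antitone; lia.
  by have [-> // | ne] := eqVneq m.+1 k; apply: below_k; lia.
case: eqVneq => [-> | ne_mk]; first exact: SwapTop.
case: eqVneq => [eq_lam | ne_lam]; first by apply: SwapBlock; lia.
by apply: SwapAbove; [lia | have := @antitone k m; lia].
Qed.

Lemma swap_perm_is_perm : is_perm_n n swap_perm.
Proof.
split => [m m_in | m m' m_in m'_in]; first by case: (swap_cornersP m_in); lia.
by case: (swap_cornersP m_in); case: (swap_cornersP m'_in); lia.
Qed.

Lemma swap_corners_mono m : 0 < m <= n -> path le_pt (n - m, m) (swap_corners m).
Proof.
move=> m_in; have := upper m_in; have := upper (j := m.+1); have := upper (j := k).
have := spread (j := m); have := antitone i_pos (ltnW lt_ik) k_le.
by case: (swap_cornersP m_in) => *; rewrite /= /le_pt /terminal /= ?andbT; lia.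
Qed.

Lemma last_swap_corners m : 0 < m <= n -> last (n - m, m) (swap_corners m) = P (swap_perm m).
Proof. by case/swap_cornersP. Qed.

Lemma swap_hooks_apart m m' : 0 < m -> m < m' -> m' <= n ->
  allrel hooks_apart (pairmap pair (n - m, m) (swap_corners m))
                     (pairmap pair (n - m', m') (swap_corners m')).
Proof.
move=> m_pos lt_mm' m'_le.
have m_in : 0 < m <= n by lia.
have m'_in : 0 < m' <= n by lia.
have := antitone m_pos (ltnW lt_mm') m'_le; have := antitone (ltn0Sn m) lt_mm' m'_le.
have := antitone i_pos (ltnW lt_ik) k_le; have := upper (j := k).
case: (swap_cornersP m_in); case: (swap_cornersP m'_in);
  rewrite /allrel /hooks_apart /hook_sep /terminal /=; lia.
Qed.

Lemma swap_paths_LD : in_LD n lam beta swap_perm swap_paths.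
Proof.
have corners_ne m : 0 < m <= n -> swap_corners m != [::] by case/swap_cornersP.
have disj m m' x : 0 < m -> m < m' -> m' <= n -> x \in swap_paths m -> x \notin swap_paths m'.
  move=> m_pos lt_mm' m'_le; have m_in : 0 < m <= n by lia.
  have m'_in : 0 < m' <= n by lia.
  apply: corner_paths_disjoint; rewrite ?corners_ne ?swap_corners_mono //.
  exact: swap_hooks_apart.
split => [m m_in | m m' m_in m'_in ne_mm' x x_in].
  split => //; first by apply: lattice_path_corner_path; case/andP: m_in.
  by rewrite last_corner_path ?swap_corners_mono // last_swap_corners.
case: (ltngtP m m') => [lt_mm' | lt_m'm | eq_mm' //]; first by apply: disj x_in; lia.
have [m'_pos m_le] : 0 < m' /\ m <= n by lia.
by apply/negP => /(disj _ _ _ m'_pos lt_m'm m_le); rewrite x_in.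
Qed.

Lemma swap_permutable : ~ nonpermutable n lam beta.
Proof.
move=> np; apply: (np swap_perm swap_perm_is_perm); last by exists swap_paths; apply: swap_paths_LD.
exists k; split; first by lia.
by rewrite /swap_perm ltnn eqxx; case: ltnP; lia.
Qed.

End Swap.

(** * Carrels and critical indices *)

Lemma mem_Rlam n lam q : q \in Rlam n lam -> 0 < q < n.
Proof. by rewrite mem_filter mem_iota => /andP [_]; lia. Qed.

Lemma bounds_sorted n lam : 0 < n -> sorted ltn (bounds n lam).
Proof.
move=> n_pos; rewrite /= rcons_path (path_sortedE ltn_trans).
rewrite (sorted_filter ltn_trans) ?iota_ltn_sorted ?andbT //.
apply/andP; split; first by apply/allP => q /mem_Rlam /andP [].
by have := mem_last 0 (Rlam n lam); rewrite inE => /orP [/eqP -> // | /mem_Rlam /andP []].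
Qed.

Lemma qq_mono n lam h h' : 0 < n -> h < h' <= (rlam n lam).+1 -> qq n lam h < qq n lam h'.
Proof.
rewrite /rlam => n_pos /andP [lt_hh' h'_le]; apply: (sorted_ltn_nth ltn_trans) => //.
- exact: bounds_sorted.
- by rewrite inE /= size_rcons; lia.
- by rewrite inE /= size_rcons; lia.
Qed.

Lemma qq_rcons n lam h : 0 < h <= (rlam n lam).+1 -> qq n lam h \in rcons (Rlam n lam) n.
Proof. by case: h => //= h h_le; apply: mem_nth; rewrite size_rcons. Qed.

Lemma carrel_of_range n lam i : i <= n -> 0 < carrel_of n lam i <= (rlam n lam).+1.
Proof.
move=> i_le; rewrite /carrel_of /= ltnS /rlam -ltnS -(size_rcons _ n) -has_find.
by apply/hasP; exists n; rewrite ?mem_rcons ?mem_head.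
Qed.

Lemma mem_min_le n s : min_le n s = n \/ min_le n s \in s.
Proof.
elim: s => [|a s IH] /=; first by left.
rewrite /minn; case: ifP => _; first by right; rewrite mem_head.
by case: IH => [-> | s_in]; [left | right; rewrite inE s_in orbT].
Qed.

Lemma last_filter_iota (P : pred nat) a l j : a <= j < a + l -> P j ->
  let z := last 0 [seq x <- iota a l | P x] in
  [/\ P z, j <= z < a + l & forall x, z < x < a + l -> ~~ P x].
Proof.
move=> + + z; suff last_ge x : a <= x < a + l -> P x -> P z /\ x <= z < a + l.
  move=> j_in Pj; have [Pz z_in] := last_ge j j_in Pj; split => // x x_in.
  apply/negP => Px; have x_in' : a <= x < a + l by lia.
  by have [_] := last_ge x x_in' Px; lia.
rewrite {}/z; elim: l x => [|l IH] x x_in Px; first by lia.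
rewrite -addn1 iotaD filter_cat last_cat /=; case: ifP => [Pl | nPl] /=; first by lia.
have [eq_x|ne_x] := eqVneq x (a + l); first by rewrite -eq_x Px in nPl.
have x_in' : a <= x < a + l by lia.
by have [] := IH x x_in' Px; split => //; lia.
Qed.

Definition steep (beta : nat -> nat) (x top : nat) : Prop :=
  forall j, x < j <= top -> beta x + j < beta j + x.

Lemma crit_cands_last beta lo y : crit_cands beta lo y != [::] ->
  let z := last 0 (crit_cands beta lo y) in
  [/\ lo < z < y, beta z + y < beta y + z & forall j, z < j < y -> beta y + j <= beta j + y].
Proof.
case E: (crit_cands beta lo y) => [//|j s] _ z.
have: j \in crit_cands beta lo y by rewrite E mem_head.
rewrite mem_filter mem_iota => /andP [Pj j_in].
have [] := @last_filter_iota (fun x => beta x + y < beta y + x) _ _ _ j_in Pj.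
rewrite -/(crit_cands beta lo y) E -/z => Pz z_in z_max.
split => // [|x x_in]; first by lia.
by rewrite leqNgt; apply: z_max; lia.
Qed.

Lemma crit_from_steep beta lo top fuel y x : steep beta y top ->
  x \in crit_from beta lo y fuel -> [/\ x <= y, x = y \/ lo < x & steep beta x top].
Proof.
elim: fuel y => [|f IH] y steep_y /=; first by rewrite inE => /eqP ->; split => //; left.
case E: (crit_cands beta lo y) => [|c s]; first by rewrite inE => /eqP ->; split => //; left.
have ne : crit_cands beta lo y != [::] by rewrite E.
have [z_in z_cand z_last] := crit_cands_last ne; rewrite E in z_in z_cand z_last.
set z := last 0 (c :: s) in z_in z_cand z_last *.
rewrite inE => /orP [/eqP -> | x_in]; first by split => //; left.
have steep_z : steep beta z top.
  move=> j j_in; have [->|ne_jy] := eqVneq j y; first exact: z_cand.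
  by have := z_last j; have := steep_y j; lia.
by have [] := IH z steep_z x_in; split => //; lia.
Qed.

Lemma last_descent (beta : nat -> nat) i0 k : i0 < k -> beta k < beta i0 ->
  exists2 i, i0 <= i < k /\ beta k < beta i & forall j, i < j < k -> beta j <= beta k.
Proof.
move=> lt_i0k desc; have i0_in : i0 <= i0 < i0 + (k - i0) by lia.
have [desc_z z_in z_max] := @last_filter_iota (fun j => beta k < beta j) _ _ _ i0_in desc.
exists (last 0 [seq j <- iota i0 (k - i0) | beta k < beta j]); first by split => //; lia.
by move=> j j_in; rewrite leqNgt; apply: z_max; lia.
Qed.

Section Nonpermutable.
Variables (n : nat) (lam beta : nat -> nat).
Hypotheses (lamP : is_partition n lam) (betaU : in_U n beta)
  (np : nonpermutable n lam beta).

Let beta_bounds j : 0 < j <= n -> beta j <= n /\ j <= beta j.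
Proof. by case/betaU. Qed.

Lemma steep_ascent i0 k top : 0 < i0 < k -> k <= top -> top \in rcons (Rlam n lam) n ->
  steep beta k top -> beta i0 <= beta k.
Proof.
move=> /andP [i0_pos lt_i0k] k_le top_in steep_k; rewrite leqNgt; apply/negP => desc.
have top_le : top <= n by move: top_in; rewrite mem_rcons inE => /orP [/eqP -> | /mem_Rlam]; lia.
have b_i0 := beta_bounds (j := i0); have b_k := beta_bounds (j := k).
have b_n := beta_bounds (j := n).
move: top_in; rewrite mem_rcons inE => /orP [/eqP top_n | ].
  have [eq_kn | ne_kn] := eqVneq k n; first by subst k; lia.
  by have := steep_k n; lia.
rewrite mem_filter mem_iota => /andP [drop top_range].
(* [top] is a descent of [lam]: hence [lam k > 0], and every later index in
   the [lam k]-block lies before [top], where [k] is steep. *)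
have [i [i_in desc_i] below_k] := last_descent lt_i0k desc.
have lam_top_k : lam top <= lam k by apply: (partition_antitone lamP); lia.
apply: (swap_permutable (i := i) (k := k) lamP betaU) => //; try lia.
move=> j j_in lam_j; have [le_jt | lt_tj] := leqP j top; first by have := steep_k j; lia.
by have := @partition_antitone n lam top.+1 j lamP; lia.
Qed.

Lemma crits_steep h x : x \in crits n lam beta h ->
  [/\ x <= qq n lam h, x = qq n lam h \/ qq n lam h.-1 < x & steep beta x (qq n lam h)].
Proof. by apply: crit_from_steep => j; lia. Qed.

Lemma beta_le_min_crits h i0 s : 0 < h <= (rlam n lam).+1 -> 0 < i0 <= n ->
  {subset s <= crits n lam beta h} -> {in s, forall x, i0 <= x} ->
  beta i0 <= beta (min_le n s).
Proof.
move=> h_in i0_in sub_s ge_s.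
have [->|k_in] := mem_min_le n s.
  by have := beta_bounds i0_in; have := beta_bounds (j := n); lia.
have [k_le _ steep_k] := crits_steep (sub_s _ k_in).
have [<-|ne] := eqVneq i0 (min_le n s); first by [].
by apply: steep_ascent k_le (qq_rcons h_in) steep_k; have := ge_s _ k_in; lia.
Qed.

Lemma flag_crit_of_nonpermutable : 0 < n -> flag_crit n lam beta.
Proof.
move=> n_pos h /andP [h_pos h_le].
have h1_in : 0 < h.+1 <= (rlam n lam).+1 by lia.
have lt_qq : qq n lam h < qq n lam h.+1 by apply: qq_mono; lia.
apply: (@beta_le_min_crits h.+1) => //.
- have := @qq_mono n lam 0 h n_pos; have -> : qq n lam 0 = 0 by [].
  have := qq_rcons h1_in.
  by rewrite mem_rcons inE => /orP [/eqP | /mem_Rlam]; lia.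
- by move=> x /crits_steep [_ [-> | /ltnW //] _]; apply: ltnW.
Qed.

Lemma platform_bound_of_nonpermutable i : 0 < i <= n -> beta i <= platform n lam beta i.
Proof.
move=> i_in; apply: (@beta_le_min_crits (carrel_of n lam i)) => //.
- by apply: carrel_of_range; case/andP: i_in.
- by move=> x; rewrite mem_filter => /andP [].
- by move=> x; rewrite mem_filter => /andP [].
Qed.

End Nonpermutable.

Theorem proposition6p3 (n : nat) (lam beta : nat -> nat) :
  1 <= n ->
  is_partition n lam ->
  in_U n beta ->
  nonpermutable n lam beta ->
  in_UGC n lam beta /\ in_UBP n lam beta.
Proof.
move=> n_pos lamP betaU np; split; split => //.
- exact: flag_crit_of_nonpermutable.
- exact: platform_bound_of_nonpermutable.
Qed.
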